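(* For any quantum seed $(X,\mathbf h,\Lambda,\widetilde B)$, $$\mathcal U(X,\mathbf h,\Lambda,\widetilde B)=\bigcap_{i=1}^n\mathbb{ZP}[X_1^{\pm1},\dots,X_{i-1}^{\pm1},X_i,X'_i,X_{i+1}^{\pm1},\dots,X_n^{\pm1}],$$ where $X'_i$ is the $i$-th cluster variable of $\mu_i(X,\mathbf h,\Lambda,\widetilde B)$.
   Context: Notation: $[a,b]=\{a,a+1,\dots,b\}$; $[x]_+=\max(x,0)$, applied entrywise to vectors; $e_1,\dots,e_m$ is the standard basis of $\mathbb Z^m$. Fix integers $m\ge n\ge 1$. A compatible pair $(\Lambda,\widetilde B)$ consists of an $m\times n$ integer matrix $\widetilde B=(b_{kl})$ and a skew-symmetric $m\times m$ integer matrix $\Lambda$ such that $\Lambda\widetilde B=-\begin{bmatrix}D\\0\end{bmatrix}$ for some $D=\mathrm{diag}(\tilde d_1,\dots,\tilde d_n)$ with all $\tilde d_k\in\mathbb Z_{>0}$. Write $\Lambda(a,b)=a^T\Lambda b$. Fix positive integers $d_1,\dots,d_n$ such that $d_k$ divides every entry of the $k$-th column $b^k$ of $\widetilde B$ (preserved under mutation); $\beta^k=\frac1{d_k}b^k$. The quantum torus $\mathcal T(\Lambda)$ is the $\mathbb Z[q^{\pm1/2}]$-algebra with basis $\{X(c)\mid c\in\mathbb Z^m\}$ and multiplication $X(c)X(d)=q^{\frac12\Lambda(c,d)}X(c+d)$; $\mathcal F$ is its skew field of fractions, $X_k=X(e_k)$. For $k\in[1,n]$, $\mathbf h_k=(h_{k,0},\dots,h_{k,d_k})$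 with $h_{k,r}\in\mathbb Z[q^{\pm1/2}]$, $h_{k,r}=h_{k,d_k-r}$, $h_{k,0}=h_{k,d_k}=1$. A quantum seed $(X,\mathbf h,\Lambda,\widetilde B)$ consists of a compatible pair, $\mathbf h$, and a map $X:\mathbb Z^m\to\mathcal F$ with $X(c)X(d)=q^{\frac12\Lambda(c,d)}X(c+d)$. Mutation in direction $i$: $\mu_i(X,\mathbf h,\Lambda,\widetilde B)=(X',\mathbf h,E^T\Lambda E,E\widetilde BF)$ where $E_{kl}=\delta_{kl}$ ($l\neq i$), $E_{ii}=-1$, $E_{ki}=[-\varepsilon b_{ki}]_+$ ($k\ne i$), $F_{kl}=\delta_{kl}$ ($k\ne i$), $F_{ii}=-1$, $F_{il}=[\varepsilon b_{il}]_+$ ($l\ne i$), $\varepsilon\in\{\pm1\}$ arbitrary, and $X'$ is determined by $X'(e_k)=X(e_k)$ ($k\ne i$) and $X'(e_i)=\sum_{r=0}^{d_i}h_{i,r}X(r[\beta^i]_++(d_i-r)[-\beta^i]_+-e_i)$; write $X'_k=X'(e_k)$. $\mathbb{ZP}$ is the ring of Laurent polynomials in $X_{n+1},\dots,X_m$ with coefficients in $\mathbb Z[q^{\pm1/2}]$; for $Y_1,\dots,Y_s\in\mathcal F$, $\mathbb{ZP}[Y_1,\dots,Y_s]$ is the subring of $\mathcal F$ generated by $\mathbb{ZP}$ and the $Y_k$ (exponent $\pm1$ means both $Y$ and $Y^{-1}$ are adjoined). For a seed $\Sigma=(X,\mathbf h,\Lambda,\widetilde B)$ let $\mathbb L(\Sigma)=\mathbb{ZP}[X_1^{\pm1},\dots,X_n^{\pm1}]$;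 the upper bound is $\mathcal U(\Sigma)=\mathbb L(\Sigma)\cap\bigcap_{i=1}^n\mathbb L(\mu_i(\Sigma))$. *)

From HB Require Import structures.
From mathcomp Require Import all_boot all_order all_algebra.
Set Implicit Arguments. Unset Strict Implicit. Unset Printing Implicit Defensive.
Import Order.TTheory GRing.Theory Num.Theory.
Local Open Scope ring_scope.

(* Indices: [1,m] is 'I_m (0-based); the mutable indices [1,n] are the
   i : 'I_m with val i < n, and 'I_n is embedded via widen_ord. *)

Inductive subring_gen (R : unitRingType) (S : R -> Prop) : R -> Prop :=
| sg_base x : S x -> subring_gen S x
| sg_one : subring_gen S 1
| sg_opp x : subring_gen S x -> subring_gen S (- x)
| sg_add x y : subring_gen S x -> subring_gen S y -> subring_gen S (x + y)
| sg_mul x y : subring_gen S x -> subring_gen S y -> subring_gen S (x * y).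

Definition lam (m : nat) (L : 'M[int]_m) (a b : 'rV[int]_m) : int :=
  (a *m L *m b^T) 0 0.

Definition evec (m : nat) (k : 'I_m) : 'rV[int]_m := delta_mx 0 k.

Definition compatible_pair (m n : nat) (L : 'M[int]_m) (B : 'M[int]_(m, n)) :=
  L^T = - L /\
  exists dt : 'I_n -> int, (forall k, 0 < dt k) /\
    forall (k : 'I_m) (l : 'I_n),
      (L *m B) k l = - (if nat_of_ord k == nat_of_ord l then dt l else 0).

Definition valid_d (m n : nat) (B : 'M[int]_(m, n)) (d : 'I_n -> nat) :=
  forall k : 'I_n, (0 < d k)%N /\ forall j : 'I_m, ((d k)%:Z %| B j k)%Z.

(* The image of Z[q^{+-1/2}] in D, where v plays the role of q^{1/2}. *)
Definition Zq (D : unitRingType) (v : D) : D -> Prop :=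
  subring_gen (fun x => x = v \/ x = v^-1).

Definition valid_h (D : unitRingType) (v : D) (n : nat) (d : 'I_n -> nat)
    (h : 'I_n -> nat -> D) :=
  forall k : 'I_n,
    (forall r, (r <= d k)%N -> Zq v (h k r)) /\
    h k 0%N = 1 /\ h k (d k) = 1 /\
    (forall r, (r <= d k)%N -> h k r = h k (d k - r)%N).

(* X : Z^m -> D is a toric frame for Lambda: the quasi-commutation rule holds
   and the family (q^{k/2} X(c))_{k in Z, c in Z^m} is Z-linearly independent,
   i.e. X extends to an embedding of the quantum torus T(Lambda) into D
   (hence of its skew field of fractions F into D). *)
Definition toric_frame (D : unitRingType) (v : D) (m : nat) (L : 'M[int]_m)
    (X : 'rV[int]_m -> D) :=
  (forall c d, X c * X d = v ^ (lam L c d) * X (c + d)) /\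
  (forall (s : seq (int * 'rV[int]_m)) (a : int * 'rV[int]_m -> int),
      uniq s ->
      \sum_(p <- s) (a p)%:~R * v ^ p.1 * X p.2 = 0 ->
      forall p, p \in s -> a p = 0).

Definition division_ring_with_q (D : unitRingType) (v : D) :=
  (forall x : D, x != 0 -> x \is a GRing.unit) /\
  v \is a GRing.unit /\ (forall x : D, v * x = x * v).

Definition pos_part (x : int) : int := Num.max x 0.

Definition mut_exp (m n : nat) (Hnm : (n <= m)%N) (B : 'M[int]_(m, n))
    (d : 'I_n -> nat) (i : 'I_n) (r : nat) : 'rV[int]_m :=
  \row_k ((r%:Z) * pos_part (divz (B k i) (d i)%:Z)
          + ((d i - r)%N%:Z) * pos_part (- divz (B k i) (d i)%:Z))
  - evec (widen_ord Hnm i).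

Definition mut_var (D : unitRingType) (m n : nat) (Hnm : (n <= m)%N)
    (X : 'rV[int]_m -> D) (h : 'I_n -> nat -> D) (B : 'M[int]_(m, n))
    (d : 'I_n -> nat) (i : 'I_n) : D :=
  \sum_(r < (d i).+1) h i r * X (mut_exp Hnm B d i r).

(* generators of ZP: q^{+-1/2} and X_j^{+-1}, j in [n+1,m] *)
Definition ZP_gens (D : unitRingType) (v : D) (m n : nat)
    (X : 'rV[int]_m -> D) (x : D) : Prop :=
  x = v \/ x = v^-1 \/
  exists j : 'I_m, (n <= j)%N /\ (x = X (evec j) \/ x = (X (evec j))^-1).

Definition ZP_adjoin (D : unitRingType) (v : D) (m n : nat)
    (X : 'rV[int]_m -> D) (Y : D -> Prop) : D -> Prop :=
  subring_gen (fun x => ZP_gens v n X x \/ Y x).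

Definition Lring (D : unitRingType) (v : D) (m n : nat) (Hnm : (n <= m)%N)
    (X : 'rV[int]_m -> D) : D -> Prop :=
  ZP_adjoin v n X (fun y => exists k : 'I_n,
     y = X (evec (widen_ord Hnm k)) \/ y = (X (evec (widen_ord Hnm k)))^-1).

(* L(mu_i Sigma) = ZP[X'_1^{+-1},...,X'_n^{+-1}], X'_k = X_k for k <> i *)
Definition Lring_mut (D : unitRingType) (v : D) (m n : nat) (Hnm : (n <= m)%N)
    (X : 'rV[int]_m -> D) (h : 'I_n -> nat -> D) (B : 'M[int]_(m, n))
    (d : 'I_n -> nat) (i : 'I_n) : D -> Prop :=
  ZP_adjoin v n X (fun y =>
     (exists k : 'I_n, k != i /\
        (y = X (evec (widen_ord Hnm k)) \/ y = (X (evec (widen_ord Hnm k)))^-1))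
     \/ y = mut_var Hnm X h B d i \/ y = (mut_var Hnm X h B d i)^-1).

Definition upper_bound (D : unitRingType) (v : D) (m n : nat) (Hnm : (n <= m)%N)
    (X : 'rV[int]_m -> D) (h : 'I_n -> nat -> D) (B : 'M[int]_(m, n))
    (d : 'I_n -> nat) (x : D) : Prop :=
  Lring v Hnm X x /\ forall i : 'I_n, Lring_mut v Hnm X h B d i x.

Definition Lring_i (D : unitRingType) (v : D) (m n : nat) (Hnm : (n <= m)%N)
    (X : 'rV[int]_m -> D) (h : 'I_n -> nat -> D) (B : 'M[int]_(m, n))
    (d : 'I_n -> nat) (i : 'I_n) : D -> Prop :=
  ZP_adjoin v n X (fun y =>
     (exists k : 'I_n, k != i /\
        (y = X (evec (widen_ord Hnm k)) \/ y = (X (evec (widen_ord Hnm k)))^-1))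
     \/ y = X (evec (widen_ord Hnm i)) \/ y = mut_var Hnm X h B d i).

From HB Require Import structures.
From mathcomp Require Import all_boot all_order all_algebra.
From mathcomp Require Import ring zify.
Import Order.TTheory GRing.Theory Num.Theory.
Local Open Scope ring_scope.
Set Implicit Arguments. Unset Strict Implicit.

(* Write X'_i for the mutated variable and A_i for the ring generated by ZP and
   the toric monomials X(c) with c_i = 0.  The monomials of X'_i all have i-th
   exponent -1 and differ by multiples of beta^i, which is Lambda-orthogonal to
   every c with c_i = 0; so X'_i quasi-commutes with A_i, and every element of
   L(mu_i Sigma) is a Laurent polynomial in X'_i with coefficients in A_i.  Its
   part with nonnegative powers lies in ZP[.., X_i, X'_i, ..].  If the element is
   also in L(Sigma), so is the part y with negative powers.  Conjugation by
   W = X(b^i) scales X(c) by q^(d~_i c_i) and a X'_i^b (a in A_i) by q^(-d~_i b),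
   and the q^k are pairwise distinct; in a division ring, eigenvectors for
   distinct central eigenvalues are independent, so comparing the two expansions
   of y shows that its toric monomials with c_i <= 0 cancel: y is a combination
   of X(c) with c_i > 0.  Conversely X_i = X'_i^-1 (X'_i X_i) with X'_i X_i in
   A_i. *)

Section SubringGen.
Variable R : unitRingType.
Implicit Types S T : R -> Prop.

Lemma sg_mono S T : (forall x, S x -> subring_gen T x) ->
  forall x, subring_gen S x -> subring_gen T x.
Proof.
move=> ST x; elim=> {x} [x /ST //|||x y _ Hx _ Hy|x y _ Hx _ Hy].
- exact: sg_one.
- by move=> x _; apply: sg_opp.
- exact: sg_add.
- exact: sg_mul.
Qed.

Lemma sg0 S : subring_gen S 0.
Proof. by rewrite -(subrr 1); apply/sg_add/sg_opp/sg_one; apply: sg_one. Qed.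

Lemma sg_sub S x y : subring_gen S x -> subring_gen S y -> subring_gen S (x - y).
Proof. by move=> Sx Sy; apply/sg_add/sg_opp. Qed.

Lemma sg_sum S (I : Type) (r : seq I) (P : pred I) (F : I -> R) :
  (forall i, P i -> subring_gen S (F i)) -> subring_gen S (\sum_(i <- r | P i) F i).
Proof. by move=> SF; apply: big_ind => //; [apply: sg0 | apply: sg_add]. Qed.

Lemma sg_exp S x k : subring_gen S x -> subring_gen S (x ^+ k).
Proof.
by move=> Sx; elim: k => [|k IH]; [rewrite expr0; apply: sg_one | rewrite exprS; apply: sg_mul].
Qed.

Lemma sg_expz S x (z : int) : subring_gen S x -> subring_gen S x^-1 -> subring_gen S (x ^ z).
Proof.
case: z => k Sx Sx'; first exact: sg_exp.
by change (subring_gen S (x ^+ k.+1)^-1); rewrite -exprVn; apply: sg_exp.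
Qed.

Lemma sg_comm S y : (forall s, S s -> s * y = y * s) ->
  forall x, subring_gen S x -> x * y = y * x.
Proof.
move=> Sy x; elim=> {x} [x /Sy //||x _ IH|x z _ IH1 _ IH2|x z _ IH1 _ IH2].
- by rewrite mul1r mulr1.
- by rewrite mulNr IH mulrN.
- by rewrite mulrDl mulrDr IH1 IH2.
- by rewrite -mulrA IH2 !mulrA IH1.
Qed.

Lemma sg_conj S g : g \is a GRing.unit ->
  (forall s, S s -> subring_gen S (g * s * g^-1)) ->
  forall x, subring_gen S x -> subring_gen S (g * x * g^-1).
Proof.
move=> ug Sg x; elim=> {x} [x /Sg //||x _ IH|x z _ IH1 _ IH2|x z _ IH1 _ IH2].
- by rewrite mulr1 mulrV //; apply: sg_one.
- by rewrite mulrN mulNr; apply: sg_opp.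
- by rewrite mulrDr mulrDl; apply: sg_add.
- have -> : g * (x * z) * g^-1 = g * x * g^-1 * (g * z * g^-1) by rewrite !mulrA divrK.
  exact: sg_mul.
Qed.
End SubringGen.

Section LinComb.
Variables (R : unitRingType) (T : eqType) (S : R -> Prop) (g : T -> R).

Definition lin_comb (x : R) := exists s : seq (R * T),
  (forall p, p \in s -> subring_gen S p.1) /\ x = \sum_(p <- s) p.1 * g p.2.

Lemma lin_comb_single a t : subring_gen S a -> lin_comb (a * g t).
Proof.
move=> Sa; exists [:: (a, t)]; rewrite big_seq1.
by split=> // p; rewrite inE => /eqP ->.
Qed.

Lemma lin_comb0 : lin_comb 0.
Proof. by exists [::]; rewrite big_nil. Qed.

Lemma lin_combD x y : lin_comb x -> lin_comb y -> lin_comb (x + y).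
Proof.
move=> [s1 [S1 ->]] [s2 [S2 ->]]; exists (s1 ++ s2); rewrite big_cat; split=> // p.
by rewrite mem_cat => /orP[/S1|/S2].
Qed.

Lemma lin_comb_sum (I : Type) (r : seq I) (P : pred I) (F : I -> R) :
  (forall i, P i -> lin_comb (F i)) -> lin_comb (\sum_(i <- r | P i) F i).
Proof. by move=> HF; apply: big_ind => //; [apply: lin_comb0 | apply: lin_combD]. Qed.

Lemma lin_combMl a x : subring_gen S a -> lin_comb x -> lin_comb (a * x).
Proof.
move=> Sa [s [Ss ->]]; rewrite mulr_sumr big_seq; apply: lin_comb_sum => p /Ss Sp.
by rewrite mulrA; apply: lin_comb_single; apply: sg_mul.
Qed.

Lemma lin_combN x : lin_comb x -> lin_comb (- x).
Proof. by rewrite -mulN1r; apply: lin_combMl; apply/sg_opp/sg_one. Qed.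

Hypothesis lin_comb_g_mul :
  forall a t t', subring_gen S a -> lin_comb (g t * (a * g t')).

Lemma lin_combM x y : lin_comb x -> lin_comb y -> lin_comb (x * y).
Proof.
move=> [s1 [S1 ->]] [s2 [S2 ->]]; rewrite mulr_suml big_seq.
apply: lin_comb_sum => p /S1 Sp; rewrite mulr_sumr big_seq; apply: lin_comb_sum => q /S2 Sq.
by rewrite -mulrA; apply: lin_combMl => //; apply: lin_comb_g_mul.
Qed.

Lemma lin_comb_subring_gen (S' : R -> Prop) t1 : g t1 = 1 ->
  (forall y, S' y -> lin_comb y) -> forall x, subring_gen S' x -> lin_comb x.
Proof.
move=> g1 HS' x; elim=> {x} [x /HS' //||x _|x y _ Hx _ Hy|x y _ Hx _ Hy].
- by rewrite -[1]mulr1 -{2}g1; apply: lin_comb_single; apply: sg_one.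
- exact: lin_combN.
- exact: lin_combD.
- exact: lin_combM.
Qed.
End LinComb.

Lemma big_undup_partition (R : nmodType) (I T : eqType) (t : seq T) (deg : T -> I)
    (f : T -> R) :
  \sum_(p <- t) f p = \sum_(k <- undup (map deg t)) \sum_(p <- t | deg p == k) f p.
Proof.
under [RHS]eq_bigr do rewrite big_mkcond.
rewrite exchange_big /=; apply: eq_big_seq => p Hp.
rewrite -big_mkcond big_const_seq.
have -> : count (fun k => deg p == k) (undup (map deg t)) = 1%N.
  rewrite (eq_count (a2 := pred1 (deg p))); last by move=> k /=; rewrite eq_sym.
  by rewrite count_uniq_mem ?undup_uniq // mem_undup map_f.
by rewrite /= addr0.
Qed.

Section Eigenvectors.
Variable D : unitRingType.
Hypothesis divD : forall x : D, x != 0 -> x \is a GRing.unit.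

Lemma divring_mul_eq0 (x y : D) : x * y = 0 -> x = 0 \/ y = 0.
Proof.
move=> xy0; case: (eqVneq x 0) => [|nx]; [by left | right].
by rewrite -(mulKr (divD nx) y) xy0 mulr0.
Qed.

Variables (I : eqType) (W : D) (mu : I -> D).
Hypothesis uW : W \is a GRing.unit.
Hypothesis mu_central : forall k x, mu k * x = x * mu k.
Hypothesis mu_inj : injective mu.

Lemma eigen_sum_eq0 (s : seq I) (F : I -> D) : uniq s ->
  (forall k, k \in s -> W * F k = mu k * F k * W) ->
  \sum_(k <- s) F k = 0 -> forall k, k \in s -> F k = 0.
Proof.
elim: s F => [|k0 s IH] F //= /andP[nk0 us] WF sum0.
have musum0 : \sum_(k <- k0 :: s) mu k * F k = 0.
  transitivity (W * (\sum_(k <- k0 :: s) F k) * W^-1); last by rewrite sum0 mulr0 mul0r.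
  rewrite mulr_sumr mulr_suml; apply: eq_big_seq => k sk.
  by rewrite WF // mulrK.
pose G k := (mu k - mu k0) * F k.
have Gsum0 : \sum_(k <- s) G k = 0.
  transitivity (\sum_(k <- k0 :: s) mu k * F k - mu k0 * \sum_(k <- k0 :: s) F k);
    last by rewrite musum0 sum0 mulr0 subrr.
  rewrite mulr_sumr -sumrB big_cons subrr add0r.
  by apply: eq_bigr => k _; rewrite /G mulrBl.
have G0 : forall k, k \in s -> G k = 0.
  apply: IH => // k sk.
  have dmu_central x : (mu k - mu k0) * x = x * (mu k - mu k0).
    by rewrite mulrBl mulrBr !mu_central.
  rewrite /G mulrA -dmu_central -mulrA WF ?inE ?sk ?orbT // !mulrA.
  by congr (_ * _ * _); rewrite dmu_central.
have F0 k : k \in s -> F k = 0.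
  move=> sk; have [/eqP|//] := divring_mul_eq0 (G0 k sk).
  rewrite subr_eq0 => /eqP/mu_inj ekk0.
  by move: nk0; rewrite -ekk0 sk.
move=> k; rewrite inE => /orP[/eqP ->|]; last exact: F0.
by move: sum0; rewrite big_cons big_seq big1 ?addr0.
Qed.

Lemma eigen_sum_part_eq0 (T : eqType) (t : seq T) (deg : T -> I) (f : T -> D) :
  (forall p, p \in t -> W * f p = mu (deg p) * f p * W) ->
  \sum_(p <- t) f p = 0 -> forall P : pred I, \sum_(p <- t | P (deg p)) f p = 0.
Proof.
move=> Wf sum0 P.
have part0 k : k \in undup (map deg t) -> \sum_(p <- t | deg p == k) f p = 0.
  apply: (eigen_sum_eq0 (F := fun k => \sum_(p <- t | deg p == k) f p)).
  - exact: undup_uniq.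
  - move=> {}k _; rewrite mulr_sumr [mu k * _]mulr_sumr mulr_suml.
    rewrite -big_filter -[RHS]big_filter; apply: eq_big_seq => p.
    by rewrite mem_filter => /andP[/eqP <- tp]; rewrite Wf.
  - by rewrite -big_undup_partition.
rewrite big_mkcond (big_undup_partition _ deg) big_seq big1 // => k tk.
case: (boolP (P k)) => Pk.
  by rewrite -[RHS](part0 k tk); apply: eq_bigr => p /eqP ->; rewrite Pk.
by apply: big1 => p /eqP ->; rewrite (negbTE Pk).
Qed.
End Eigenvectors.

Section QuasiCommutation.
Variables (D : unitRingType) (U G y : D).
Hypothesis uU : U \is a GRing.unit.
Hypothesis U_central : forall x, U * x = x * U.

Lemma central_exprz (b : int) x : U ^ b * x = x * U ^ b.
Proof. exact/esym/commrXz/esym/U_central. Qed.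

Lemma central_inv x : U^-1 * x = x * U^-1.
Proof. by rewrite -[U^-1]exprN1 central_exprz. Qed.

Hypothesis GyU : G * y = U * y * G.

Lemma qcomm_exprl k : G ^+ k * y = U ^+ k * y * G ^+ k.
Proof.
elim: k => [|k IH]; first by rewrite !expr0 !mul1r !mulr1.
rewrite exprS -mulrA IH !mulrA -(central_exprz k G) -(mulrA _ G y) GyU.
by rewrite exprSr !mulrA.
Qed.

Lemma qcomm_exprr k : G * y ^+ k = U ^+ k * y ^+ k * G.
Proof.
elim: k => [|k IH]; first by rewrite !expr0 !mul1r !mulr1.
rewrite exprSr mulrA IH -!mulrA GyU !mulrA.
by rewrite exprSr -(mulrA _ (y ^+ k) U) -(U_central (y ^+ k)) !mulrA.
Qed.

Lemma qcomm_invl : G \is a GRing.unit -> G^-1 * y = U^-1 * y * G^-1.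
Proof.
move=> uG; have : G^-1 * (G * y) * G^-1 = G^-1 * (U * y * G) * G^-1 by rewrite GyU.
rewrite mulKr // -!mulrA mulrV // mulr1 => ->.
by rewrite (mulrA G^-1) -(U_central G^-1) !mulrA mulVr // mul1r.
Qed.

Lemma qcomm_invr : y \is a GRing.unit -> G * y^-1 = U^-1 * y^-1 * G.
Proof.
move=> uy; have yG : y^-1 * G = U * G * y^-1.
  rewrite -[y^-1 * G](mulrK uy) -(mulrA y^-1 G y) GyU.
  by rewrite (U_central y) -(mulrA y U G) (mulKr uy).
by rewrite -mulrA yG !mulrA mulVr // mul1r.
Qed.
End QuasiCommutation.

Section QuasiCommutationZ.
Variables (D : unitRingType) (U G y : D).
Hypothesis uU : U \is a GRing.unit.
Hypothesis U_central : forall x, U * x = x * U.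
Hypothesis GyU : G * y = U * y * G.

Lemma qcomm_exprzl (b : int) : G \is a GRing.unit -> G ^ b * y = U ^ b * y * G ^ b.
Proof.
move=> uG; case: b => k; first exact: qcomm_exprl.
change ((G ^+ k.+1)^-1 * y = (U ^+ k.+1)^-1 * y * (G ^+ k.+1)^-1).
rewrite -!exprVn; apply: qcomm_exprl; first exact: central_inv.
exact: qcomm_invl.
Qed.

Lemma qcomm_exprzr (b : int) : y \is a GRing.unit -> G * y ^ b = U ^ b * y ^ b * G.
Proof.
move=> uy; case: b => k; first exact: qcomm_exprr.
change (G * (y ^+ k.+1)^-1 = (U ^+ k.+1)^-1 * (y ^+ k.+1)^-1 * G).
rewrite -!exprVn; apply: qcomm_exprr; first exact: central_inv.
exact: qcomm_invr.
Qed.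
End QuasiCommutationZ.

Section SkewForm.
Variables (m : nat) (L : 'M[int]_m).
Hypothesis L_skew : L^T = - L.

Lemma lam_skew a b : lam L a b = - lam L b a.
Proof.
rewrite /lam; have -> : a *m L *m b^T = (b *m L^T *m a^T)^T by rewrite !trmx_mul !trmxK mulmxA.
by rewrite L_skew mulmxN mulNmx !mxE.
Qed.

Lemma lamDr a b c : lam L a (b + c) = lam L a b + lam L a c.
Proof. by rewrite /lam linearD /= mulmxDr mxE. Qed.

Lemma lamZr a (k : int) b : lam L a (k *: b) = k * lam L a b.
Proof. by rewrite /lam linearZ /= -scalemxAr mxE. Qed.

Lemma lamNr a b : lam L a (- b) = - lam L a b.
Proof. by rewrite -scaleN1r lamZr mulN1r. Qed.

Lemma lamZl a (k : int) b : lam L (k *: b) a = k * lam L b a.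
Proof. by rewrite lam_skew lamZr -mulrN -lam_skew. Qed.

Lemma lam_aa a : lam L a a = 0.
Proof.
have : lam L a a + lam L a a = 0 by rewrite {1}lam_skew addNr.
by rewrite -mulr2n => /eqP; rewrite mulrn_eq0 /= => /eqP.
Qed.
End SkewForm.

Section ToricFrame.
Variables (D : unitRingType) (v : D) (m : nat) (L : 'M[int]_m) (X : 'rV[int]_m -> D).
Hypothesis divD : forall x : D, x != 0 -> x \is a GRing.unit.
Hypothesis uv : v \is a GRing.unit.
Hypothesis v_central : forall x : D, v * x = x * v.
Hypothesis L_skew : L^T = - L.
Hypothesis XM : forall c d, X c * X d = v ^ (lam L c d) * X (c + d).
Hypothesis X_free : forall (s : seq (int * 'rV[int]_m)) (a : int * 'rV[int]_m -> int),
  uniq s -> \sum_(p <- s) (a p)%:~R * v ^ p.1 * X p.2 = 0 ->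
  forall p, p \in s -> a p = 0.

Lemma X0 : X 0 = 1.
Proof.
have X0_neq0 : X 0 != 0.
  apply/eqP => X00; have := X_free (s := [:: (0, 0)]) (a := fun _ => 1) erefl.
  rewrite big_seq1 /= X00 mulr0 => /(_ erefl (0, 0)).
  by rewrite mem_seq1 eqxx => /(_ erefl).
have := XM 0 0; rewrite addr0 /lam !mul0mx mxE expr0z mul1r => X00.
by apply: (mulrI (divD X0_neq0)); rewrite X00 mulr1.
Qed.

Lemma v_exprz_eq1 (z : int) : v ^ z = 1 -> z = 0.
Proof.
move=> vz1; apply/eqP; apply: contraT => nz.
have := X_free (s := [:: (z, 0); (0, 0)]) (a := fun p => if p.1 == 0 then -1 else 1).
rewrite /= inE /= xpair_eqE (negbTE nz) /= => /(_ erefl).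
rewrite big_cons big_seq1 /= (negbTE nz) vz1 expr0z X0 !mulr1 mulrN1z subrr.
by move=> /(_ erefl (z, 0) (mem_head _ _)); rewrite /= (negbTE nz).
Qed.

Lemma v_exprz_inj : injective (fun z : int => v ^ z).
Proof.
move=> a b /= vab; apply/eqP; rewrite -subr_eq0; apply/eqP/v_exprz_eq1.
by rewrite (exprzDr uv) vab -(exprzDr uv) subrr expr0z.
Qed.

Lemma X_unit c : X c \is a GRing.unit.
Proof.
have XN a : X a * X (- a) = 1 by rewrite XM addrN X0 mulr1 lamNr // lam_aa // oppr0 expr0z.
by apply/unitrP; exists (X (- c)); rewrite XN -{2}[c]opprK XN.
Qed.

Lemma X_inv c : (X c)^-1 = X (- c).
Proof.
apply: (mulrI (X_unit c)); rewrite mulrV ?X_unit //.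
by rewrite XM addrN X0 mulr1 lamNr // lam_aa // oppr0 expr0z.
Qed.

Lemma XD a b : X (a + b) = v ^ (- lam L a b) * (X a * X b).
Proof. by rewrite XM mulrA -(exprzDr uv) addNr expr0z mul1r. Qed.

Lemma X_comm a b : X a * X b = v ^ (lam L a b + lam L a b) * (X b * X a).
Proof.
by rewrite XM [X b * _]XM (addrC b a) mulrA -(exprzDr uv) (lam_skew L_skew b a) addrK.
Qed.

Lemma XZ (k : int) c : X (k *: c) = X c ^ k.
Proof.
have XZn (j : nat) : X (j%:Z *: c) = X c ^+ j.
  elim: j => [|j IH]; first by rewrite scale0r X0 expr0.
  have -> : j.+1%:Z *: c = j%:Z *: c + c by rewrite -[j.+1]addn1 PoszD scalerDl scale1r.
  rewrite XD IH exprSr.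
  by rewrite (lamZl L_skew) (lam_aa L_skew) mulr0 oppr0 expr0z mul1r.
by case: k => k; rewrite ?NegzE ?scaleNr -?X_inv XZn.
Qed.

Lemma Zq_central z y : Zq v z -> z * y = y * z.
Proof.
by apply: sg_comm => s [->|->]; [apply: v_central | apply: central_inv].
Qed.

Lemma Zq_exprz (z : int) : Zq v (v ^ z).
Proof. by apply: sg_expz; apply: sg_base; [left | right]. Qed.

Lemma X_sg (S : D -> Prop) (c : 'rV[int]_m) :
  S v -> S v^-1 -> (forall j, subring_gen S (X (c 0 j *: evec j))) ->
  subring_gen S (X c).
Proof.
move=> Sv SvV Sj; rewrite [c](matrix_sum_delta) big_ord1.
elim: (index_enum _) => [|j r IH]; first by rewrite big_nil X0; apply: sg_one.
rewrite big_cons XD; apply: sg_mul; first by apply: sg_expz; apply: sg_base.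
exact: sg_mul.
Qed.

Lemma lin_comb_X_sg (S : D -> Prop) :
  (forall y, S y -> Zq v y \/ exists c, y = X c) ->
  forall x, subring_gen S x -> lin_comb (fun y => y = v \/ y = v^-1) X x.
Proof.
move=> SX; apply: (lin_comb_subring_gen _ X0) => [a c c' Za|y /SX[Zy|[c ->]]].
- rewrite mulrA -(Zq_central _ Za) -mulrA XM mulrA.
  by apply: lin_comb_single; apply/sg_mul/Zq_exprz.
- by rewrite -[y]mulr1 -X0; apply: lin_comb_single.
- by rewrite -[X c]mul1r; apply/lin_comb_single/sg_one.
Qed.

(* [v] stands for q^(1/2), so [qpow k] is q^k. *)
Definition qpow (k : int) := v ^ (k + k).

Lemma qpow_central k x : qpow k * x = x * qpow k.
Proof. exact: central_exprz. Qed.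

Lemma qpow_unit k : qpow k \is a GRing.unit.
Proof. exact: unitrXz. Qed.

Lemma qpow_inj : injective qpow.
Proof. by move=> k l /v_exprz_inj; lia. Qed.

Lemma qpow_exprz k (b : int) : qpow k ^ b = qpow (k * b).
Proof. by rewrite /qpow exprz_exp mulrDl. Qed.

Section Mutation.
Variables (n : nat) (Hnm : (n <= m)%N) (B : 'M[int]_(m, n)) (d : 'I_n -> nat)
  (h : 'I_n -> nat -> D) (dt : 'I_n -> int) (i : 'I_n).
Hypothesis dt_pos : forall k, 0 < dt k.
Hypothesis LB : forall (k : 'I_m) (l : 'I_n),
  (L *m B) k l = - (if nat_of_ord k == nat_of_ord l then dt l else 0).
Hypothesis dB : valid_d B d.
Hypothesis hZq : valid_h v d h.

Local Notation ii := (widen_ord Hnm i).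
Local Notation e := (evec ii).
Local Notation mexp := (mut_exp Hnm B d i).
Local Notation Xmut := (mut_var Hnm X h B d i).

Definition mut_col : 'rV[int]_m := \row_k B k i.
Definition beta : 'rV[int]_m := \row_k divz (B k i) (d i)%:Z.

Lemma evec_ii (j : 'I_m) : evec j 0 ii = (j == ii)%:R.
Proof. by rewrite mxE eqxx eq_sym. Qed.

Lemma lam_mut_col c : lam L c mut_col = - (dt i * c 0 ii).
Proof.
rewrite /lam -mulmxA mxE.
have LBi k : (L *m mut_col^T) k 0 = (L *m B) k i.
  by rewrite !mxE; apply: eq_bigr => j _; rewrite !mxE.
under eq_bigr do rewrite LBi LB.
rewrite (bigD1 ii) //= eqxx big1 ?addr0; first by rewrite mulrN mulrC.
by move=> k nk; rewrite ifN ?mulr0 ?oppr0.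
Qed.

Lemma mut_col_beta : mut_col = (d i)%:Z *: beta.
Proof.
apply/matrixP => a b; rewrite !mxE mulrC divzK //.
by case: (dB i) => _ /(_ b).
Qed.

Lemma mut_col_ii : mut_col 0 ii = 0.
Proof.
have := lam_mut_col mut_col; rewrite (lam_aa L_skew) => /eqP.
by rewrite eq_sym oppr_eq0 mulf_eq0 gt_eqF ?dt_pos //= => /eqP.
Qed.

Lemma beta_ii : beta 0 ii = 0.
Proof. by have := mut_col_ii; rewrite !mxE => ->; rewrite div0z. Qed.

Lemma lam_beta (c : 'rV[int]_m) : c 0 ii = 0 -> lam L c beta = 0.
Proof.
have d_neq0 : (d i)%:Z != 0 by case: (dB i) => d_gt0 _; rewrite eqz_nat -lt0n.
move=> c_ii; have := lam_mut_col c; rewrite c_ii mulr0 oppr0 mut_col_beta lamZr //.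
by move/eqP; rewrite mulf_eq0 (negbTE d_neq0) /= => /eqP.
Qed.

Lemma lam_e_beta : lam L e beta != 0.
Proof.
have := lam_mut_col e; rewrite evec_ii eqxx mulr1 mut_col_beta lamZr //.
move=> eb; apply/eqP => eb0; move: eb; rewrite eb0 mulr0 => /eqP.
by rewrite eq_sym oppr_eq0 gt_eqF ?dt_pos.
Qed.

Lemma mut_exp_eq (r : nat) : (r <= d i)%N -> mexp r = mexp 0 + r%:Z *: beta.
Proof.
move=> rd; apply/matrixP => a b; rewrite !mxE subn0 -(subzn rd).
set p := pos_part _; set q := pos_part _.
have -> : divz (B b i) (d i)%:Z = p - q by rewrite /p /q /pos_part; lia.
ring.
Qed.

Lemma mut_exp_ii (r : nat) : mexp r 0 ii = -1.
Proof.
have := beta_ii; rewrite !mxE => ->; rewrite /pos_part oppr0 /Num.max ltxx /=.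
by rewrite !mulr0 add0r eqxx.
Qed.

Lemma h_Zq (r : nat) : (r <= d i)%N -> Zq v (h i r).
Proof. by case: (hZq i) => Zh _; apply: Zh. Qed.

Lemma lam_mut_exp (c : 'rV[int]_m) (r : nat) : (r <= d i)%N ->
  lam L c (mexp r) = lam L c (mexp 0) + r%:Z * lam L c beta.
Proof. by move=> rd; rewrite mut_exp_eq // lamDr lamZr. Qed.

Lemma Xmut_qcomm (c : 'rV[int]_m) : c 0 ii = 0 ->
  Xmut * X c = qpow (lam L (mexp 0) c) * X c * Xmut.
Proof.
move=> c_ii; rewrite mulr_suml mulr_sumr; apply: eq_bigr => r _.
have Zh := h_Zq (ltn_ord r).
rewrite -mulrA X_comm (lam_skew L_skew) (lam_mut_exp _ (ltn_ord r)) (lam_beta c_ii).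
rewrite mulr0 addr0 -(lam_skew L_skew) !mulrA; congr (_ * _).
by rewrite -mulrA (Zq_central _ Zh).
Qed.

(* The monomials of X'_i are eigenvectors of conjugation by X_i with pairwise
   distinct weights (they differ by multiples of lam e beta != 0), and the one
   for r = 0 has coefficient h_{i,0} = 1. *)
Lemma Xmut_unit : Xmut \is a GRing.unit.
Proof.
apply: divD; apply/eqP => Xmut0.
have Xe_eigen r : r \in index_enum 'I_(d i).+1 ->
    X e * (h i r * X (mexp r)) = qpow (lam L e (mexp r)) * (h i r * X (mexp r)) * X e.
  move=> _; have rd := ltn_ord r.
  rewrite mulrA -(Zq_central _ (h_Zq rd)) -mulrA X_comm.
  by rewrite !mulrA [h i r * _](Zq_central _ (h_Zq rd)).
have := eigen_sum_part_eq0 divD (X_unit e) qpow_central qpow_inj Xe_eigen Xmut0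
  (pred1 (lam L e (mexp 0))).
have only_r0 : (fun r : 'I_(d i).+1 => lam L e (mexp r) == lam L e (mexp 0)) =1 pred1 ord0.
  move=> r /=; rewrite (lam_mut_exp _ (ltn_ord r)) -subr_eq0 addrAC subrr add0r.
  by rewrite mulf_eq0 (negbTE lam_e_beta) orbF eqz_nat.
rewrite (big_pred1 _ only_r0) /=; case: (hZq i) => _ [-> _]; rewrite mul1r => X0eq0.
by have := X_unit (mexp 0); rewrite X0eq0 unitr0.
Qed.

Local Notation W := (X mut_col).

Lemma W_X c : W * X c = qpow (dt i * c 0 ii) * X c * W.
Proof. by rewrite X_comm (lam_skew L_skew) lam_mut_col opprK mulrA. Qed.

Lemma W_Xmut : W * Xmut = qpow (- dt i) * Xmut * W.
Proof.
rewrite mulr_sumr [qpow _ * _]mulr_sumr mulr_suml; apply: eq_bigr => r _.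
have Zh := h_Zq (ltn_ord r).
rewrite mulrA -(Zq_central W Zh) -mulrA W_X mut_exp_ii mulrN1.
by rewrite !mulrA (Zq_central _ Zh).
Qed.

(* Generators of the ring A_i of the header. *)
Definition coef_gen (y : D) :=
  y = v \/ y = v^-1 \/ exists2 c : 'rV[int]_m, c 0 ii = 0 & y = X c.

Local Notation coef_ring := (subring_gen coef_gen).

Lemma coef_ring_X (c : 'rV[int]_m) : c 0 ii = 0 -> coef_ring (X c).
Proof. by move=> c_ii; apply: sg_base; right; right; exists c. Qed.

Lemma coef_ring_Zq z : Zq v z -> coef_ring z.
Proof. by apply: sg_mono => y [->|->]; apply: sg_base; [left | right; left]. Qed.

Lemma coef_ring_W_comm y : coef_ring y -> y * W = W * y.
Proof.
apply: sg_comm => s [->|[->|[c c_ii ->]]].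
- exact: v_central.
- exact: central_inv.
- by rewrite W_X c_ii mulr0 /qpow addr0 expr0z mul1r.
Qed.

Lemma coef_ring_conj (b : int) a :
  coef_ring a -> coef_ring (Xmut ^ b * a * (Xmut ^ b)^-1).
Proof.
have uXb : Xmut ^ b \is a GRing.unit by apply: unitrXz; apply: Xmut_unit.
apply: sg_conj => // s [->|[->|[c c_ii ->]]].
- by rewrite -v_central mulrK //; apply: sg_base; left.
- by rewrite -(central_inv v_central) mulrK //; apply: sg_base; right; left.
- rewrite (qcomm_exprzl (qpow_unit _) (qpow_central _) (Xmut_qcomm c_ii) b Xmut_unit).
  rewrite mulrK // qpow_exprz.
  by apply: sg_mul; [apply/coef_ring_Zq/Zq_exprz | apply: coef_ring_X].
Qed.

Lemma lin_comb_Xmut_sg (S : D -> Prop) :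
  (forall y, S y -> coef_ring y \/ exists b, y = Xmut ^ b) ->
  forall x, subring_gen S x -> lin_comb coef_gen (fun b : int => Xmut ^ b) x.
Proof.
move=> SX; apply: (lin_comb_subring_gen _ (expr0z Xmut)) => [a b b' Aa|y /SX[Ay|[b ->]]].
- have -> : Xmut ^ b * (a * Xmut ^ b') = Xmut ^ b * a * (Xmut ^ b)^-1 * Xmut ^ (b + b').
    by rewrite (exprzDr Xmut_unit) !mulrA mulrVK ?unitrXz ?Xmut_unit.
  exact/lin_comb_single/coef_ring_conj.
- by rewrite -[y]mulr1 -(expr0z Xmut); apply: lin_comb_single.
- by rewrite -[_ ^ b]mul1r; apply/lin_comb_single/sg_one.
Qed.

Lemma widen_neq (k : 'I_n) : k != i -> widen_ord Hnm k != ii.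
Proof. by apply: contra => /eqP/(congr1 val) ki; apply/eqP/val_inj. Qed.

Lemma frozen_neq (j : 'I_m) : (n <= j)%N -> j != ii.
Proof. by apply: contraTneq => ->; rewrite -ltnNge; apply: ltn_ord i. Qed.

Section AdjoinedRing.
Variable Y : D -> Prop.
Local Notation R := (ZP_adjoin v n X Y).
Hypothesis Y_other : forall k : 'I_n, k != i ->
  Y (X (evec (widen_ord Hnm k))) /\ Y (X (evec (widen_ord Hnm k)))^-1.

Lemma Zq_ZP_adjoin z : Zq v z -> R z.
Proof. by apply: sg_mono => y [->|->]; apply: sg_base; left; [left | right; left]. Qed.

Lemma X_evec_ZP_adjoin (j : 'I_m) : j != ii -> R (X (evec j)) /\ R (X (evec j))^-1.
Proof.
move=> nj; case: (ltnP j n) => [jn|frozen_j].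
  have wj : widen_ord Hnm (Ordinal jn) = j by apply: val_inj.
  have nk : Ordinal jn != i by apply: contra nj => /eqP ki; rewrite -wj ki.
  by have [Yj YjV] := Y_other nk; rewrite -wj; split; apply: sg_base; right.
by split; apply: sg_base; left; right; right; exists j; split=> //; [left | right].
Qed.

Lemma X_ZP_adjoin (c : 'rV[int]_m) : R (X (c 0 ii *: e)) -> R (X c).
Proof.
move=> Re; apply: X_sg => [||j]; [by left; left | by left; right; left |].
have [->//|nj] := eqVneq j ii.
by have [Rj RjV] := X_evec_ZP_adjoin nj; rewrite XZ; apply: sg_expz.
Qed.

Lemma coef_ring_ZP_adjoin y : coef_ring y -> R y.
Proof.
apply: sg_mono => z [->|[->|[c c_ii ->]]].
- by apply: sg_base; left; left.
- by apply: sg_base; left; right; left.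
- by apply: X_ZP_adjoin; rewrite c_ii scale0r X0; apply: sg_one.
Qed.

Lemma Xmut_ZP_adjoin : R (X e) -> R (X e)^-1 -> R Xmut.
Proof.
move=> Re ReV; apply: sg_sum => r _; apply: sg_mul.
  exact/Zq_ZP_adjoin/h_Zq/(ltn_ord r).
by apply: X_ZP_adjoin; rewrite mut_exp_ii XZ exprN1.
Qed.
End AdjoinedRing.

Local Notation Lring_i := (Lring_i v Hnm X h B d i).
Local Notation Lring_mut := (Lring_mut v Hnm X h B d i).

Lemma Lring_i_sub_Lring x : Lring_i x -> Lring v Hnm X x.
Proof.
apply: sg_mono => y [Zy|[[k [_ Yk]]|[->|->]]].
- by apply: sg_base; left.
- by apply: sg_base; right; exists k.
- by apply: sg_base; right; exists i; left.
- apply: Xmut_ZP_adjoin => [k _||].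
  + by split; exists k; [left | right].
  + by apply: sg_base; right; exists i; left.
  + by apply: sg_base; right; exists i; right.
Qed.

Lemma X_evec_coef_ring (j : 'I_m) : j != ii ->
  coef_ring (X (evec j)) /\ coef_ring (X (evec j))^-1.
Proof.
move=> nj; rewrite X_inv; split; apply: coef_ring_X.
  by rewrite evec_ii (negbTE nj).
by rewrite mxE evec_ii (negbTE nj) oppr0.
Qed.

Lemma Xmut_Xe_coef_ring : coef_ring (Xmut * X e).
Proof.
rewrite mulr_suml; apply: sg_sum => r _; rewrite -mulrA XM mulrA.
apply: sg_mul; first by apply/sg_mul/coef_ring_Zq/Zq_exprz/coef_ring_Zq/h_Zq/(ltn_ord r).
by apply: coef_ring_X; rewrite mxE mut_exp_ii evec_ii eqxx addNr.
Qed.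

Lemma Lring_i_sub_Lring_mut x : Lring_i x -> Lring_mut x.
Proof.
apply: sg_mono => y [Zy|[[k [nk Yk]]|[->|->]]].
- by apply: sg_base; left.
- by apply: sg_base; right; left; exists k.
- rewrite -[X e](mulKr Xmut_unit); apply: sg_mul.
    by apply: sg_base; right; right; right.
  apply: coef_ring_ZP_adjoin Xmut_Xe_coef_ring => k' nk'.
  by split; left; exists k'; split=> //; [left | right].
- by apply: sg_base; right; right; left.
Qed.

Lemma Lring_mut_lin_comb x :
  Lring_mut x -> lin_comb coef_gen (fun b : int => Xmut ^ b) x.
Proof.
apply: lin_comb_Xmut_sg => y [[->|[->|[j [nj Yj]]]]|[[k [nk Yk]]|[->|->]]].
- by left; apply: sg_base; left.
- by left; apply: sg_base; right; left.
- by left; have [? ?] := X_evec_coef_ring (frozen_neq nj); case: Yj => ->.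
- by left; have [? ?] := X_evec_coef_ring (widen_neq nk); case: Yk => ->.
- by right; exists 1; rewrite expr1z.
- by right; exists (-1); rewrite exprN1.
Qed.

Lemma Lring_lin_comb x : Lring v Hnm X x -> lin_comb (fun y => y = v \/ y = v^-1) X x.
Proof.
apply: lin_comb_X_sg => y [[->|[->|[j [_ [->|->]]]]]|[k [->|->]]];
  rewrite ?X_inv; do ?[by right; eexists].
- by left; apply: sg_base; left.
- by left; apply: sg_base; right.
Qed.

Lemma coef_ring_Lring_i y : coef_ring y -> Lring_i y.
Proof.
by apply: coef_ring_ZP_adjoin => k nk; split; left; exists k; split=> //; [left | right].
Qed.

Lemma X_pos_Lring_i (c : 'rV[int]_m) : 0 <= c 0 ii -> Lring_i (X c).
Proof.
move=> c_ii; apply: X_ZP_adjoin.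
  by move=> k nk; split; left; exists k; split=> //; [left | right].
rewrite XZ; case: (c 0 ii) c_ii => // k _.
by apply: sg_exp; apply: sg_base; right; right; left.
Qed.

Lemma W_coef_Xmut_exprz a (b : int) : coef_ring a ->
  W * (a * Xmut ^ b) = qpow (- dt i * b) * (a * Xmut ^ b) * W.
Proof.
move=> Aa; rewrite mulrA -(coef_ring_W_comm Aa) -mulrA.
rewrite (qcomm_exprzr (qpow_unit _) (qpow_central _) W_Xmut b Xmut_unit) qpow_exprz.
by rewrite !mulrA -(qpow_central _ a).
Qed.

Lemma toric_nonpos_weight_eq0 (s : seq (D * int)) (t : seq (D * 'rV[int]_m)) :
  (forall p, p \in s -> coef_ring p.1 /\ p.2 < 0) ->
  (forall q, q \in t -> Zq v q.1) ->
  \sum_(q <- t) q.1 * X q.2 = \sum_(p <- s) p.1 * Xmut ^ p.2 ->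
  \sum_(q <- t | dt i * q.2 0 ii <= 0) q.1 * X q.2 = 0.
Proof.
move=> sA tZ ts.
pose u := [seq (q.1 * X q.2, dt i * q.2 0 ii) | q <- t] ++
          [seq (- (p.1 * Xmut ^ p.2), - dt i * p.2) | p <- s].
have u0 : \sum_(p <- u) p.1 = 0 by rewrite big_cat !big_map /= ts sumrN subrr.
have Wu p : p \in u -> W * p.1 = qpow p.2 * p.1 * W.
  rewrite mem_cat => /orP[/mapP[q tq ->]|/mapP[q sq ->]] /=.
    rewrite mulrA -(Zq_central _ (tZ q tq)) -mulrA W_X !mulrA.
    by rewrite (Zq_central _ (tZ q tq)).
  by have [Aq _] := sA q sq; rewrite !(mulrN, mulNr) W_coef_Xmut_exprz // mulNr.
have := eigen_sum_part_eq0 divD (X_unit _) qpow_central qpow_inj Wu u0 (fun k => k <= 0).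
rewrite big_cat /= !big_map /= [X in _ + X]big1_seq ?addr0 // => -[a b] /andP[/= weight sb].
by exfalso; have [_ /= b_neg] := sA _ sb; move: weight; have := dt_pos i; nia.
Qed.

Lemma Lring_neg_Xmut_part_Lring_i (s : seq (D * int)) :
  (forall p, p \in s -> coef_ring p.1 /\ p.2 < 0) ->
  Lring v Hnm X (\sum_(p <- s) p.1 * Xmut ^ p.2) ->
  Lring_i (\sum_(p <- s) p.1 * Xmut ^ p.2).
Proof.
move=> sA /Lring_lin_comb[t [tZ ts]].
rewrite ts (bigID (fun q : D * 'rV[int]_m => dt i * q.2 0 ii <= 0)) /=.
rewrite (toric_nonpos_weight_eq0 sA tZ (esym ts)) add0r.
rewrite big_seq_cond; apply: sg_sum => -[a c] /andP[tc /= weight].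
apply: sg_mul; first exact/Zq_ZP_adjoin/(tZ _ tc).
by apply: X_pos_Lring_i; move: weight; have := dt_pos i; nia.
Qed.

Lemma Lring_Lring_mut_sub_Lring_i x : Lring v Hnm X x -> Lring_mut x -> Lring_i x.
Proof.
move=> Lx /Lring_mut_lin_comb[s [sA xs]].
set xneg := \sum_(p <- [seq p <- s | p.2 < 0]) p.1 * Xmut ^ p.2.
set xpos := \sum_(p <- s | ~~ (p.2 < 0)) p.1 * Xmut ^ p.2.
have x_split : x = xneg + xpos by rewrite xs (bigID (fun p => p.2 < 0)) /xneg big_filter.
have xpos_i : Lring_i xpos.
  rewrite /xpos big_seq_cond; apply: sg_sum => -[a b] /andP[sp /= b_nneg].
  apply: sg_mul; first exact/coef_ring_Lring_i/(sA _ sp).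
  by case: b b_nneg {sp} => // k _; apply: sg_exp; apply: sg_base; right; right; right.
have xneg_L : Lring v Hnm X xneg.
  have -> : xneg = x - xpos by rewrite x_split addrK.
  exact/sg_sub/Lring_i_sub_Lring.
have xneg_i : Lring_i xneg.
  apply: Lring_neg_Xmut_part_Lring_i xneg_L => p.
  by rewrite mem_filter => /andP[neg /sA].
by rewrite x_split; apply: sg_add.
Qed.

Lemma Lring_iE x : Lring_i x <-> Lring v Hnm X x /\ Lring_mut x.
Proof.
split=> [Lix | [Lx Lmx]]; last exact: Lring_Lring_mut_sub_Lring_i.
by split; [apply: Lring_i_sub_Lring | apply: Lring_i_sub_Lring_mut].
Qed.
End Mutation.
End ToricFrame.

Theorem proposition4p2 (D : unitRingType) (v : D) (m n : nat)
    (Hn : (1 <= n)%N) (Hnm : (n <= m)%N)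
    (L : 'M[int]_m) (B : 'M[int]_(m, n)) (d : 'I_n -> nat)
    (h : 'I_n -> nat -> D) (X : 'rV[int]_m -> D) :
  division_ring_with_q v ->
  compatible_pair L B ->
  valid_d B d ->
  valid_h v d h ->
  toric_frame v L X ->
  forall x : D,
    upper_bound v Hnm X h B d x <-> (forall i : 'I_n, Lring_i v Hnm X h B d i x).
Proof.
move=> [divD [uv v_central]] [L_skew [dt [dt_pos LB]]] dB hZq [XM X_free] x.
have Li_E i := Lring_iE divD uv v_central L_skew XM X_free Hnm i dt_pos LB dB hZq x.
split=> [[Lx Lmut_x] i | Li_x]; first exact/Li_E.
split=> [|i]; last by have [] := (Li_E i).1 (Li_x i).
by have [] := (Li_E _).1 (Li_x (Ordinal Hn)).
Qed.
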